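(* Let $\{q_x,\rho_x\}_{x=1}^N$ be an ensemble of density operators on a finite-dimensional Hilbert space with probabilities $q_x$, and let $K$ be its symmetry operator, i.e. $K$ is Hermitian and there exist $r_x\ge0$, density operators $\sigma_x$ and a POVM $\{M_x\}$ with $K=q_x\rho_x+r_x\sigma_x$ and $r_x\mathrm{tr}[M_x\sigma_x]=0$ for all $x$. Then $$P_{\mathrm{guess}}=\frac1N+R,\qquad R=\frac1N\sum_{x=1}^N\|K-q_x\rho_x\|_1 .$$
   Context: $P_{\mathrm{guess}}=\max_{\{M_x\}}\sum_x q_x\mathrm{tr}[M_x\rho_x]$, the maximum over POVMs (families of positive semidefinite operators summing to the identity). $\|A\|_1=\mathrm{tr}|A|$ is the trace norm. *)

From mathcomp Require Import all_boot all_order all_algebra.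
From mathcomp Require Import complex.
From mathcomp Require Import boolp classical_sets reals.
Set Implicit Arguments. Unset Strict Implicit. Unset Printing Implicit Defensive.
Import Order.TTheory GRing.Theory Num.Theory.
Local Open Scope ring_scope.

Section QDefs.
Variable R : realType.
Local Notation C := R[i].

Definition adjm (m n : nat) (A : 'M[C]_(m, n)) : 'M[C]_(n, m) :=
  (map_mx (@conjc R) A)^T.

Definition hermitian (d : nat) (A : 'M[C]_d) : Prop := adjm A = A.

Definition psd (d : nat) (A : 'M[C]_d) : Prop :=
  hermitian A /\ forall v : 'cV[C]_d, 0 <= (adjm v *m A *m v) 0 0.

Definition density (d : nat) (A : 'M[C]_d) : Prop := psd A /\ \tr A = 1.

Definition POVM (d N : nat) (M : 'I_N -> 'M[C]_d) : Prop :=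
  (forall x, psd (M x)) /\ \sum_(x < N) M x = 1%:M.

Definition probvec (N : nat) (q : 'I_N -> R) : Prop :=
  (forall x, 0 <= q x) /\ \sum_(x < N) q x = 1.

(* the (unique) positive semidefinite square root of A (0 if none exists) *)
Definition sqrtm (d : nat) (A : 'M[C]_d) : 'M[C]_d :=
  xget 0 [set B | psd B /\ B *m B = A].

Definition trnorm (d : nat) (A : 'M[C]_d) : R :=
  complex.Re (\tr (sqrtm (adjm A *m A))).

Definition succ_prob (d N : nat) (q : 'I_N -> R) (rho : 'I_N -> 'M[C]_d)
  (M : 'I_N -> 'M[C]_d) : R :=
  \sum_(x < N) q x * complex.Re (\tr (M x *m rho x)).

Definition Pguess (d N : nat) (q : 'I_N -> R) (rho : 'I_N -> 'M[C]_d) : R :=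
  sup [set p | exists M : 'I_N -> 'M[C]_d, POVM M /\ p = succ_prob q rho M].

Definition symmetry_operator (d N : nat) (q : 'I_N -> R)
  (rho : 'I_N -> 'M[C]_d) (K : 'M[C]_d) : Prop :=
  hermitian K /\
  exists (r : 'I_N -> R) (sigma : 'I_N -> 'M[C]_d) (M : 'I_N -> 'M[C]_d),
    POVM M /\
    forall x, [/\ 0 <= r x, density (sigma x),
      K = (q x)%:C%C *: rho x + (r x)%:C%C *: sigma x &
      (r x)%:C%C * \tr (M x *m sigma x) = 0].

End QDefs.

From Pilot Require Import Defs.
From mathcomp Require Import all_boot all_order all_algebra.
From mathcomp Require Import complex.
From mathcomp Require spectral.
From mathcomp Require Import boolp classical_sets reals.
Import Order.TTheory GRing.Theory Num.Theory.
Local Open Scope ring_scope.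
Set Implicit Arguments. Unset Strict Implicit. Unset Printing Implicit Defensive.

(* Write K = q_x rho_x + r_x sigma_x.  Since sum_x M_x = 1, every POVM M
   succeeds with probability tr K - sum_x r_x tr[M_x sigma_x] <= tr K, and the
   POVM of the symmetry operator attains tr K, so P_guess = tr K.  Each
   K - q_x rho_x = r_x sigma_x is positive semidefinite, so by uniqueness of
   positive square roots its trace norm is its trace r_x = tr K - q_x; summing
   over x gives N tr K = 1 + sum_x r_x. *)

Lemma sup_max (R : realType) (E : set R) (x : R) :
  E x -> ubound E x -> sup E = x.
Proof.
move=> Ex ubx; apply/le_anti/andP; split; first by apply: ge_sup => //; exists x.
by apply: sup_upper_bound => //; split; exists x.
Qed.

Section Adjoint.
Variable R : realType.
Local Notation C := R[i].

Lemma adjmK m n (A : 'M[C]_(m, n)) : adjm (adjm A) = A.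
Proof. by apply/matrixP => i j; rewrite /adjm !mxE conjcK. Qed.

Lemma adjmM m n p (A : 'M[C]_(m, n)) (B : 'M[C]_(n, p)) :
  adjm (A *m B) = adjm B *m adjm A.
Proof. by rewrite /adjm (map_mxM (@Num.conj C)) trmx_mul. Qed.

Lemma adjmD m n (A B : 'M[C]_(m, n)) : adjm (A + B) = adjm A + adjm B.
Proof. by rewrite /adjm (map_mxD (@Num.conj C)) linearD. Qed.

Lemma adjmN m n (A : 'M[C]_(m, n)) : adjm (- A) = - adjm A.
Proof. by rewrite /adjm (map_mxN (@Num.conj C)) linearN. Qed.

Lemma adjmZ m n (c : C) (A : 'M[C]_(m, n)) : adjm (c *: A) = c^*%C *: adjm A.
Proof. by apply/matrixP => i j; rewrite /adjm !mxE rmorphM. Qed.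

Lemma adjm_mulmx_ge0 m (w : 'cV[C]_m) : 0 <= (adjm w *m w) 0 0.
Proof.
rewrite !mxE; apply: sumr_ge0 => i _; rewrite /adjm !mxE mulrC.
exact: mulcJ_ge0.
Qed.

Lemma adjm_mulmx_eq0 m n (A : 'M[C]_(m, n)) : adjm A *m A = 0 -> A = 0.
Proof.
move=> AA0; apply/matrixP => i j.
have /eqP := congr1 (fun B : 'M[C]_n => B j j) AA0; rewrite !mxE.
rewrite psumr_eq0; last by move=> k _; rewrite /adjm !mxE mulrC mulcJ_ge0.
move=> /allP /(_ i (mem_index_enum _)).
by rewrite /adjm !mxE mulf_eq0 conjc_eq0 orbb => /eqP.
Qed.

End Adjoint.

Section PositiveSemidefinite.
Variable R : realType.
Local Notation C := R[i].

Lemma psdZ n (r : R) (A : 'M[C]_n) : 0 <= r -> psd A -> psd (r%:C%C *: A).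
Proof.
move=> r_ge0 [hA pA]; split; first by rewrite /Defs.hermitian adjmZ conjc_real hA.
move=> v; rewrite -scalemxAr -scalemxAl mxE.
by apply: mulr_ge0; [rewrite ler0c | exact: pA].
Qed.

Lemma psd_conj_hermitian n (D A : 'M[C]_n) :
  Defs.hermitian D -> psd A -> psd (D *m A *m D).
Proof.
move=> hD [hA pA]; split; first by rewrite /Defs.hermitian !adjmM hD hA mulmxA.
by move=> v; have := pA (D *m v); rewrite adjmM hD !mulmxA.
Qed.

Lemma psd_sqr_hermitian n (D : 'M[C]_n) : Defs.hermitian D -> psd (D *m D).
Proof.
move=> hD; split; first by rewrite /Defs.hermitian adjmM hD.
by move=> v; have := adjm_mulmx_ge0 (D *m v); rewrite adjmM hD !mulmxA.
Qed.

Lemma psd_conj_diag_ge0 m n (U : 'M[C]_(m, n)) (A : 'M[C]_n) i :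
  psd A -> 0 <= (U *m A *m adjm U) i i.
Proof.
move=> [_ pA]; have := pA (adjm (row i U)); rewrite adjmK.
congr (0 <= _); rewrite /adjm !mxE; apply: eq_bigr => k _; rewrite !mxE.
by congr (_ * _); apply: eq_bigr => l _; rewrite !mxE.
Qed.

Lemma hermitian_spectral n (A : 'M[C]_n) : Defs.hermitian A ->
  exists U (e : 'rV[C]_n), [/\ U *m adjm U = 1%:M, adjm U *m U = 1%:M &
    A = adjm U *m diag_mx e *m U].
Proof.
move=> hA; have nA : A \is spectral.normalmx.
  by apply/eqP; rewrite -!map_trmx -/(adjm _) hA.
have uU := spectral.spectral_unitarymx A.
have invU := spectral.invmx_unitary uU.
exists (spectral.spectralmx A), (spectral.spectral_diag A).
rewrite /adjm map_trmx -invU; split.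
- by rewrite mulmxV // spectral.unitarymx_unit.
- by rewrite mulVmx // spectral.unitarymx_unit.
- exact/spectral.orthomx_spectralP.
Qed.

Lemma psd_spectral n (A : 'M[C]_n) : psd A ->
  exists U (e : 'rV[C]_n), [/\ U *m adjm U = 1%:M, adjm U *m U = 1%:M,
    A = adjm U *m diag_mx e *m U & forall i, 0 <= e 0 i].
Proof.
move=> pA; have [U [e [UU' U'U Ae]]] := hermitian_spectral pA.1.
exists U, e; split=> // i; have := psd_conj_diag_ge0 U i pA.
by rewrite Ae !mulmxA UU' mul1mx -mulmxA UU' mulmx1 mxE eqxx mulr1n.
Qed.

Lemma mxtrace_mul_psd_ge0 n (A B : 'M[C]_n) :
  psd A -> psd B -> 0 <= \tr (A *m B).
Proof.
move=> pA pB; have [U [e [_ _ -> e_ge0]]] := psd_spectral pA.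
rewrite -!mulmxA mxtrace_mulC -!mulmxA [X in diag_mx e *m X]mulmxA.
rewrite /mxtrace; apply: sumr_ge0 => i _; rewrite mul_diag_mx mxE.
exact: mulr_ge0 (e_ge0 i) (psd_conj_diag_ge0 U i pB).
Qed.

Lemma psd_mxtrace_eq0 n (A : 'M[C]_n) : psd A -> \tr A = 0 -> A = 0.
Proof.
move=> pA; have [U [e [UU' _ Ae e_ge0]]] := psd_spectral pA.
have -> : \tr A = \tr (diag_mx e) by rewrite Ae mxtrace_mulC mulmxA UU' mul1mx.
rewrite mxtrace_diag => /eqP; rewrite psumr_eq0 //= => /allP e0.
rewrite Ae; have -> : e = 0.
  by apply/rowP => i; apply/eqP; rewrite mxE; exact: e0 (mem_index_enum _).
by rewrite linear0 mulmx0 mul0mx.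
Qed.

Lemma hermitian_cube_eq0 n (D : 'M[C]_n) :
  Defs.hermitian D -> D *m D *m D = 0 -> D = 0.
Proof.
move=> hD D3; apply: adjm_mulmx_eq0; rewrite hD; apply: adjm_mulmx_eq0.
by rewrite adjmM hD -mulmxA [D *m (D *m D)]mulmxA D3 mulmx0.
Qed.

(* With D := A - B one has A D = - D B, so tr(A D^2) = - tr(B D^2); both
   traces are nonnegative, hence D A D and D B D vanish, and so does D^3. *)
Lemma psd_sqr_inj n (A B : 'M[C]_n) :
  psd A -> psd B -> A *m A = B *m B -> A = B.
Proof.
move=> pA pB AB; apply/eqP; rewrite -subr_eq0; apply/eqP.
have [D DE] : {D | D = A - B} by exists (A - B).
have hD : Defs.hermitian D by rewrite /Defs.hermitian DE adjmD adjmN pA.1 pB.1.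
have trDXD X : \tr (D *m X *m D) = \tr (X *m (D *m D)).
  by rewrite -mulmxA mxtrace_mulC mulmxA.
have AD : A *m D = - (D *m B) by rewrite DE mulmxBr mulmxBl AB opprB.
have trAB : \tr (A *m (D *m D)) = - \tr (B *m (D *m D)).
  by rewrite mulmxA AD mulNmx raddfN -trDXD.
have trA_ge0 := mxtrace_mul_psd_ge0 pA (psd_sqr_hermitian hD).
have trB_ge0 := mxtrace_mul_psd_ge0 pB (psd_sqr_hermitian hD).
have trA0 : \tr (A *m (D *m D)) = 0.
  by apply/le_anti; rewrite trA_ge0 andbT trAB oppr_le0.
have trB0 : \tr (B *m (D *m D)) = 0 by apply/oppr_inj; rewrite -trAB trA0 oppr0.
have DAD : D *m A *m D = 0.
  by apply: psd_mxtrace_eq0; [exact: psd_conj_hermitian | rewrite trDXD].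
have DBD : D *m B *m D = 0.
  by apply: psd_mxtrace_eq0; [exact: psd_conj_hermitian | rewrite trDXD].
rewrite -DE; apply: hermitian_cube_eq0 => //.
by rewrite {2}DE mulmxBr mulmxBl DAD DBD subrr.
Qed.

Lemma sqrtm_psd_sqr n (A : 'M[C]_n) : psd A -> sqrtm (A *m A) = A.
Proof.
move=> pA; rewrite /sqrtm.
by case: xgetP => [B _ [pB BB]|/(_ A)[]//]; apply: psd_sqr_inj.
Qed.

Lemma trnorm_psd n (A : 'M[C]_n) : psd A -> trnorm A = complex.Re (\tr A).
Proof. by move=> pA; rewrite /trnorm pA.1 sqrtm_psd_sqr. Qed.

End PositiveSemidefinite.

Section RealPart.
Variable R : rcfType.

Lemma ReD (x y : R[i]) : complex.Re (x + y) = complex.Re x + complex.Re y.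
Proof. exact: (raddfD (@complex.Re R : Rcomplex R -> R)). Qed.

Lemma Re_sum (I : finType) (F : I -> R[i]) :
  complex.Re (\sum_i F i) = \sum_i complex.Re (F i).
Proof. exact: (raddf_sum (@complex.Re R : Rcomplex R -> R)). Qed.

Lemma Re_realM (a : R) (z : R[i]) : complex.Re (a%:C%C * z) = a * complex.Re z.
Proof. by case: z => x y /=; rewrite mul0r subr0. Qed.

Lemma Re_ge0 (z : R[i]) : 0 <= z -> 0 <= complex.Re z.
Proof. by rewrite lecE => /andP[]. Qed.

End RealPart.

Section SymmetryOperator.
Variables (R : realType) (d N : nat) (q r : 'I_N -> R).
Variables (rho sigma M : 'I_N -> 'M[R[i]]_d) (K : 'M[R[i]]_d).
Hypothesis q_sum : \sum_x q x = 1.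
Hypothesis rho_density : forall x, density (rho x).
Hypothesis M_POVM : POVM M.
Hypothesis K_sym : forall x, [/\ 0 <= r x, density (sigma x),
  K = (q x)%:C%C *: rho x + (r x)%:C%C *: sigma x &
  (r x)%:C%C * \tr (M x *m sigma x) = 0].

Local Notation trK := (complex.Re (\tr K)).

Lemma Re_mxtrace_sym x : trK = q x + r x.
Proof.
have [_ [_ tr_sigma] -> _] := K_sym x; have [_ tr_rho] := rho_density x.
by rewrite mxtraceD !mxtraceZ tr_sigma tr_rho !mulr1 ReD.
Qed.

Lemma succ_prob_sym P : POVM P ->
  succ_prob q rho P = trK - \sum_x r x * complex.Re (\tr (P x *m sigma x)).
Proof.
move=> [_ sumP]; have -> : trK = \sum_x complex.Re (\tr (P x *m K)).
  by rewrite -Re_sum -raddf_sum -mulmx_suml sumP mul1mx.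
rewrite /succ_prob -sumrB; apply: eq_bigr => x _; have [_ _ Kx _] := K_sym x.
by rewrite Kx mulmxDr mxtraceD -!scalemxAr !mxtraceZ ReD !Re_realM addrK.
Qed.

Lemma succ_prob_le_sym P : POVM P -> succ_prob q rho P <= trK.
Proof.
move=> PP; rewrite succ_prob_sym // lerBlDr lerDl; apply: sumr_ge0 => x _.
have [r_ge0 [psd_sigma _] _ _] := K_sym x; apply: mulr_ge0 => //.
by apply/Re_ge0/mxtrace_mul_psd_ge0; [exact: PP.1 | exact: psd_sigma].
Qed.

Lemma Pguess_sym : Pguess q rho = trK.
Proof.
apply: sup_max => [|p [P [PP ->]]]; last exact: succ_prob_le_sym.
exists M; split=> //; rewrite succ_prob_sym // big1 ?subr0 // => x _.
by have [_ _ _ Mx] := K_sym x; rewrite -Re_realM Mx.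
Qed.

Lemma trnorm_sym x : trnorm (K - (q x)%:C%C *: rho x) = r x.
Proof.
have [r_ge0 [psd_sigma tr_sigma] -> _] := K_sym x.
rewrite addrC addKr trnorm_psd; last exact: psdZ.
by rewrite mxtraceZ tr_sigma mulr1.
Qed.

Lemma Re_mxtrace_sym_mean : trK = N%:R^-1 + N%:R^-1 * \sum_x r x.
Proof.
have sum_trK : N%:R * trK = 1 + \sum_x r x.
  have : \sum_(x < N) trK = \sum_x (q x + r x).
    by apply: eq_bigr => x _; exact: Re_mxtrace_sym.
  by rewrite sumr_const card_ord mulr_natl big_split /= q_sum.
have sum_r_ge0 : 0 <= \sum_x r x by apply: sumr_ge0 => x _; have [] := K_sym x.
have N_neq0 : N%:R != 0 :> R.
  apply/eqP => N0; move: sum_trK; rewrite N0 mul0r => /eqP.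
  by rewrite lt_eqF // ltr_pwDl.
by rewrite -[N%:R^-1 in X in X + _]mulr1 -mulrDr -sum_trK mulKf.
Qed.

End SymmetryOperator.

Theorem proposition2 (R : realType) (d N : nat) (q : 'I_N -> R)
  (rho : 'I_N -> 'M[R[i]]_d) (K : 'M[R[i]]_d) :
  probvec q ->
  (forall x, density (rho x)) ->
  symmetry_operator q rho K ->
  Pguess q rho =
    N%:R^-1 + N%:R^-1 * \sum_(x < N) trnorm (K - (q x)%:C%C *: rho x).
Proof.
move=> [_ q_sum] rho_density [_ [r [sigma [M [M_POVM K_sym]]]]].
rewrite (Pguess_sym M_POVM K_sym) (Re_mxtrace_sym_mean q_sum rho_density K_sym).
by under [in RHS]eq_bigr do rewrite (trnorm_sym K_sym).
Qed.
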